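(* Let $(E,\|\cdot\|)$ be a non-archimedean Banach space over $K$ which has a finite maximal orthogonal subset, and let $X=\{a_1,\dots,a_m\}\subseteq E$ be a maximal orthogonal subset. Put $t_i=\|a_i\|$ for $i=1,\dots,m$. Then there exists a $K$-linear isometry $$T:E\to ((K^{\vee})^m,|\cdot|_{t_1}\times\cdots\times|\cdot|_{t_m})$$ such that $T(a_i)=e_i$ for $i=1,\dots,m$, where $e_1,\dots,e_m\in (K^\vee)^m$ are the canonical unit vectors.
   Context: $K$ is a complete non-archimedean non-trivially valued field which is not spherically complete. $K^{\vee}$ is a fixed spherically complete valued field which is an immediate extension of $K$ (for each nonzero $x\in K^\vee$ there is $d\in K$ with $|x-d|<|x|$). For $t>0$, $(K^\vee,|\cdot|_t)$ denotes $K^\vee$ regarded as a $K$-normed space with norm $|x|_t=t|x|$, and $((K^{\vee})^m,|\cdot|_{t_1}\times\cdots\times|\cdot|_{t_m})$ is the direct sum of $(K^\vee,|\cdot|_{t_i})$ with the max norm $\|(x_1,\dots,x_m)\|=\max_i t_i|x_i|$. A subset $X\subseteq E\setminus\{0\}$ is orthogonal if $\|\sum_i\lambda_ix_i\|=\max_i\|\lambda_ix_i\|$ for all finite $\{x_1,\dots,x_n\}\subseteq X$ and $\lambda_i\in K$. *)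

From HB Require Import structures.
From mathcomp Require Import all_boot all_order all_algebra.
From mathcomp Require Import reals.
Set Implicit Arguments. Unset Strict Implicit. Unset Printing Implicit Defensive.
Import Order.TTheory GRing.Theory Num.Theory.
Local Open Scope ring_scope.

Definition nonarch_abs (R : realType) (F : fieldType) (abs : F -> R) : Prop :=
  [/\ (forall x, 0 <= abs x),
      (forall x, abs x = 0 <-> x = 0),
      (forall x y, abs (x * y) = abs x * abs y) &
      (forall x y, abs (x + y) <= Num.max (abs x) (abs y))].

Definition nontrivial_abs (R : realType) (F : fieldType) (abs : F -> R) : Prop :=
  exists x, abs x <> 0 /\ abs x <> 1.

Definition complete_wrt (R : realType) (V : zmodType) (d : V -> R) : Prop :=
  forall u : nat -> V,
    (forall e : R, 0 < e -> exists N, forall p q, (N <= p)%N -> (N <= q)%N ->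
        d (u p - u q) < e) ->
    exists l : V, forall e : R, 0 < e -> exists N, forall n, (N <= n)%N ->
        d (u n - l) < e.

Definition cball (R : realType) (F : fieldType) (abs : F -> R) (c : F) (r : R) : F -> Prop :=
  fun x => abs (x - c) <= r.

Definition spherically_complete (R : realType) (F : fieldType) (abs : F -> R) : Prop :=
  forall (I : Type) (c : I -> F) (r : I -> R),
    inhabited I ->
    (forall i, 0 <= r i) ->
    (forall i j, (forall x, cball abs (c i) (r i) x -> cball abs (c j) (r j) x) \/
                 (forall x, cball abs (c j) (r j) x -> cball abs (c i) (r i) x)) ->
    exists x, forall i, cball abs (c i) (r i) x.

Definition nonarch_norm (R : realType) (K : fieldType) (absK : K -> R)
    (E : lmodType K) (nrm : E -> R) : Prop :=
  [/\ (forall x, 0 <= nrm x),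
      (forall x, nrm x = 0 <-> x = 0),
      (forall (l : K) x, nrm (l *: x) = absK l * nrm x) &
      (forall x y, nrm (x + y) <= Num.max (nrm x) (nrm y))].

Definition orthogonal (R : realType) (K : fieldType) (E : lmodType K)
    (nrm : E -> R) (X : E -> Prop) : Prop :=
  (forall x, X x -> x <> 0) /\
  forall (n : nat) (x : 'I_n -> E) (l : 'I_n -> K),
    injective x -> (forall i, X (x i)) ->
    nrm (\sum_(i < n) l i *: x i) = \big[Num.max/0]_(i < n) nrm (l i *: x i).

Definition maximal_orthogonal (R : realType) (K : fieldType) (E : lmodType K)
    (nrm : E -> R) (X : E -> Prop) : Prop :=
  orthogonal nrm X /\
  forall Y : E -> Prop, orthogonal nrm Y -> (forall x, X x -> Y x) ->
    forall x, Y x -> X x.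

From Pilot Require Import Defs.
From HB Require Import structures.
From mathcomp Require Import all_boot all_order all_algebra.
From mathcomp Require Import reals.
From mathcomp Require Import boolp classical_sets functions.
Import Order.TTheory GRing.Theory Num.Theory.
Local Open Scope ring_scope.

Set Implicit Arguments. Unset Strict Implicit. Unset Printing Implicit Defensive.

(** On the span of the orthogonal family [a], the coordinate map
   [sum_i c_i a_i |-> (iota c_i)_i] is an isometry onto its image in [(K^vee)^m]
   with the weighted max norm.  Maximality of the family means that every
   [x <> 0] lies at distance [< ||x||] from the span, since otherwise adjoining
   [x] would give a larger orthogonal family.  A linear isometry [T] defined on a subspace
   [D] containing the span extends to [D + K x]: the closed balls
   [B(T z, ||x - z||)], [z] in [D], form a chain, and spherical completeness of
   [K^vee] (coordinatewise) gives a common point [y]; approximating [x - z] from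
   the span then forces [||y - T z|| = ||x - z||], so [x |-> y] extends [T]
   isometrically.  Zorn's lemma yields an isometry defined on all of [E]. *)

Section Ultrametric.
Variables (R : realDomainType) (V : zmodType) (N : V -> R).
Hypotheses (NN : forall x, N (- x) = N x)
           (NU : forall x y, N (x + y) <= Num.max (N x) (N y)).

Lemma ultra_addr_eq x y : N y < N x -> N (x + y) = N x.
Proof.
move=> lt_yx; apply/le_anti/andP; split.
  by apply: le_trans (NU x y) _; rewrite ge_max lexx ltW.
have := NU (x + y) (- y); rewrite addrK NN le_max => /orP[//|le_xy].
by move: (lt_le_trans lt_yx le_xy); rewrite ltxx.
Qed.

Lemma ultra_subr_eq x y : N (x - y) < N x -> N y = N x.
Proof. by move=> lt; rewrite -[y](subKr x) ultra_addr_eq ?NN. Qed.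

Lemma ultra_add_max x y : N x <= N (x + y) -> N (x + y) = Num.max (N x) (N y).
Proof.
have [lt_xy _|le_yx le_x_xy] := ltP (N x) (N y).
  by rewrite addrC ultra_addr_eq // max_r // ltW.
by apply/le_anti; rewrite le_x_xy andbT -(max_l le_yx) NU.
Qed.

End Ultrametric.

Section AbsoluteValue.
Variables (R : realType) (F : fieldType) (ab : F -> R).
Hypothesis hab : nonarch_abs ab.

Lemma abs_ge0 x : 0 <= ab x. Proof. by case: hab. Qed.
Lemma abs_eq0 x : ab x = 0 -> x = 0. Proof. by case: hab => _ h _ _ /h. Qed.
Lemma absM x y : ab (x * y) = ab x * ab y. Proof. by case: hab. Qed.
Lemma absU x y : ab (x + y) <= Num.max (ab x) (ab y). Proof. by case: hab. Qed.

Lemma abs1 : ab 1 = 1.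
Proof.
have ab1_neq0 : ab 1 != 0 by apply/eqP => /abs_eq0/eqP; rewrite oner_eq0.
by apply: (mulfI ab1_neq0); rewrite -absM !mulr1.
Qed.

Lemma absN x : ab (- x) = ab x.
Proof.
have /eqP : ab (-1) ^+ 2 = 1 by rewrite expr2 -absM mulrNN mulr1 abs1.
by rewrite sqrp_eq1 ?abs_ge0 // => /eqP abN1; rewrite -mulN1r absM abN1 mul1r.
Qed.

Lemma cball_nested (c1 c2 : F) (r1 r2 : R) : ab (c1 - c2) <= Num.max r1 r2 ->
  (forall z, cball ab c1 r1 z -> cball ab c2 r2 z) \/
  (forall z, cball ab c2 r2 z -> cball ab c1 r1 z).
Proof.
rewrite /cball; have [le_r12 c12|lt_r21 c12] := leP r1 r2.
  left=> z z1; rewrite -(subrKA c1); apply: le_trans (absU _ _) _.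
  by rewrite ge_max c12 (le_trans z1 le_r12).
right=> z z2; rewrite -(subrKA c2); apply: le_trans (absU _ _) _.
by rewrite ge_max (le_trans z2 (ltW lt_r21)) -opprB absN.
Qed.

End AbsoluteValue.

Lemma big_option (T : Type) (idx : T) (op : SemiGroup.com_law T) (I : finType)
    (F : option I -> T) :
  \big[op/idx]_(o : option I) F o = op (F None) (\big[op/idx]_(i : I) F (Some i)).
Proof.
rewrite (bigD1 None) //=; congr (op _ _).
rewrite (reindex_omap Some id) //=; last by case.
by apply: eq_bigl => i; rewrite eqxx.
Qed.

Lemma bigmax_pMr (R : realDomainType) (I : finType) (c : R) (F : I -> R) : 0 <= c ->
  c * \big[Num.max/0]_i F i = \big[Num.max/0]_i (c * F i).
Proof.
move=> c_ge0; apply: (big_ind2 (fun u w => c * u = w)); first by rewrite mulr0.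
  by move=> u1 w1 u2 w2 <- <-; rewrite maxr_pMr.
by [].
Qed.

Lemma mull0_fun (T : Type) (F : pzRingType) (f : T -> F) : 0 \*o f = 0.
Proof. by apply: funext => x /=; rewrite mul0r. Qed.

Section NonArchNorm.
Variables (R : realType) (K : fieldType) (absK : K -> R).
Variables (E : lmodType K) (nrm : E -> R).
Hypotheses (hK : nonarch_abs absK) (hE : nonarch_norm absK nrm).

Lemma nrm_ge0 x : 0 <= nrm x. Proof. by case: hE. Qed.
Lemma nrm_eq0 x : nrm x = 0 <-> x = 0. Proof. by case: hE. Qed.
Lemma nrmZ l x : nrm (l *: x) = absK l * nrm x. Proof. by case: hE. Qed.
Lemma nrmU x y : nrm (x + y) <= Num.max (nrm x) (nrm y). Proof. by case: hE. Qed.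
Lemma nrm0 : nrm 0 = 0. Proof. exact/nrm_eq0. Qed.
Lemma nrmN x : nrm (- x) = nrm x.
Proof. by rewrite -scaleN1r nrmZ absN // abs1 // mul1r. Qed.

Lemma nrm_gt0 x : x <> 0 -> 0 < nrm x.
Proof. by move=> x0; rewrite lt_def nrm_ge0 andbT; apply/eqP => /nrm_eq0. Qed.

Lemma orthogonal_range (I : finType) (b : I -> E) :
  (forall i, b i <> 0) ->
  (forall L : I -> K,
    nrm (\sum_i L i *: b i) = \big[Num.max/0]_i nrm (L i *: b i)) ->
  Defs.orthogonal nrm (fun z => exists i, z = b i).
Proof.
move=> b_neq0 b_orth; split=> [_ [i ->] //|n y l y_inj y_b].
have /fin_all_exists [g yg] : forall k, exists i, y k = b i.
  by move=> k; have [i ->] := y_b k; exists i.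
have g_inj : injective g by move=> k1 k2 e; apply: y_inj; rewrite !yg e.
pose L i := \sum_(k | g k == i) l k.
have Lg k : L (g k) = l k.
  by rewrite /L (big_pred1 k) // => k'; rewrite /= (inj_eq g_inj).
have -> : \sum_k l k *: y k = \sum_i L i *: b i.
  rewrite (eq_bigr (fun k => l k *: b (g k))) => [|k _]; last by rewrite yg.
  rewrite (partition_big g xpredT) //=; apply: eq_bigr => i _.
  by rewrite scaler_suml; apply: eq_bigr => k /eqP <-.
rewrite b_orth; apply/le_anti/andP; split; apply/bigmax_leP;
  split => [|i _]; try exact: bigmax_ge_id.
  have [[k <-]|not_img] := pselect (exists k, g k = i).
    by rewrite Lg -yg; exact: (le_bigmax _ (fun k => nrm (l k *: y k)) k).
  rewrite /L big_pred0 ?scale0r ?nrm0 ?bigmax_ge_id // => k.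
  by apply/eqP => gk; apply: not_img; exists k.
by rewrite yg -Lg; exact: (le_bigmax _ (fun i => nrm (L i *: b i)) (g i)).
Qed.

End NonArchNorm.

Section PartialFunctionOfGraph.
Variables (T U : Type) (G : T -> U -> Prop).

Definition pfun_of (z : T) : option U :=
  if pselect (exists u, G z u) is left h then Some (projT1 (cid h)) else None.

Lemma pfun_ofP z u : pfun_of z = Some u -> G z u.
Proof. by rewrite /pfun_of; case: pselect => // h [<-]; case: (cid h). Qed.

Hypothesis G_functional : forall z u1 u2, G z u1 -> G z u2 -> u1 = u2.

Lemma pfun_of_graph z u : G z u -> pfun_of z = Some u.
Proof.
move=> Gzu; rewrite /pfun_of; case: pselect => [h|]; last by case; exists u.
by case: (cid h) => u' /= Gzu'; rewrite (G_functional Gzu' Gzu).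
Qed.

End PartialFunctionOfGraph.
Arguments pfun_ofP {T U} G {z u}.

Section IsometryExtension.
Variables (R : realType) (K : fieldType) (absK : K -> R).
Hypothesis hK : nonarch_abs absK.
Variables (Kv : fieldType) (absv : Kv -> R) (iota : {rmorphism K -> Kv}).
Hypotheses (hKv : nonarch_abs absv) (hKvsc : spherically_complete absv).
Hypothesis hiota : forall d : K, absv (iota d) = absK d.
Variables (E : lmodType K) (nrm : E -> R).
Hypothesis hE : nonarch_norm absK nrm.
Variables (m : nat) (a : 'I_m -> E).
Hypothesis a_inj : injective a.
Hypothesis a_maxorth : maximal_orthogonal nrm (fun x => exists i, x = a i).

Let t i := nrm (a i).

Definition comb (c : 'I_m -> K) : E := \sum_i c i *: a i.

Lemma a_neq0 i : a i <> 0.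
Proof. by case: a_maxorth => -[a_neq0 _] _; apply: a_neq0; exists i. Qed.

Lemma t_gt0 i : 0 < t i.
Proof. exact/(nrm_gt0 hE)/a_neq0. Qed.

Lemma nrm_comb c : nrm (comb c) = \big[Num.max/0]_i (absK (c i) * t i).
Proof.
case: a_maxorth => -[_ a_orth] _.
rewrite (a_orth m a c a_inj) => [|i]; last by exists i.
by apply: eq_bigr => i _; rewrite (nrmZ hE).
Qed.

Lemma combD (c1 c2 : 'I_m -> K) : comb (c1 + c2) = comb c1 + comb c2.
Proof. by rewrite /comb -big_split; apply: eq_bigr => i _; rewrite scalerDl. Qed.

Lemma combB (c1 c2 : 'I_m -> K) : comb (c1 - c2) = comb c1 - comb c2.
Proof. by rewrite /comb -sumrB; apply: eq_bigr => i _; rewrite scalerBl. Qed.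

Lemma combN c : comb (fun i => - c i) = - comb c.
Proof. by rewrite /comb -sumrN; apply: eq_bigr => i _; rewrite scaleNr. Qed.

Lemma combZ l c : comb (fun i => l * c i) = l *: comb c.
Proof. by rewrite /comb scaler_sumr; apply: eq_bigr => i _; rewrite scalerA. Qed.

Lemma comb_delta i : comb (fun j => if i == j then 1 else 0) = a i.
Proof.
rewrite /comb (bigD1 i) //= eqxx scale1r big1 ?addr0 // => j ji.
by rewrite eq_sym (negbTE ji) scale0r.
Qed.

Lemma comb_inj : injective comb.
Proof.
move=> c1 c2 /eqP; rewrite -subr_eq0 -combB => /eqP /(congr1 nrm).
rewrite (nrm0 hE) nrm_comb => /eqP; rewrite eq_le => /andP[/bigmax_leP [_ le0] _].
apply: funext => i; apply/eqP; rewrite -subr_eq0; apply/eqP/(abs_eq0 hK).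
have := le0 i isT; rewrite pmulr_lle0 ?t_gt0 // => le0i.
by apply/le_anti; rewrite le0i abs_ge0.
Qed.

Section AdjoinFarVector.
Variable x : E.
Hypothesis x_far : forall c, nrm x <= nrm (x - comb c).

Lemma nrm_adjoin lam c :
  nrm (lam *: x + comb c) = Num.max (nrm (lam *: x)) (nrm (comb c)).
Proof.
apply: (ultra_add_max (nrmN hK hE) (nrmU hE)).
have [->|lam0] := eqVneq lam 0; first by rewrite scale0r (nrm0 hE) (nrm_ge0 hE).
have -> : lam *: x + comb c = lam *: (x - comb (fun i => lam^-1 * - c i)).
  by rewrite combZ combN scalerBr scalerA mulfV // scale1r opprK.
by rewrite !(nrmZ hE) ler_wpM2l ?abs_ge0.
Qed.

Lemma orthogonal_adjoin :
  x <> 0 -> Defs.orthogonal nrm (fun z => exists o, z = oapp a x o).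
Proof.
move=> x_neq0; apply: (orthogonal_range hE) => [[i|] //=|L]; first exact: a_neq0.
rewrite !big_option /= -/(comb (fun i => L (Some i))) nrm_adjoin nrm_comb.
by congr Num.max; apply: eq_bigr => i _; rewrite (nrmZ hE).
Qed.

End AdjoinFarVector.

Lemma exists_closer_comb x : x <> 0 -> exists c, nrm (x - comb c) < nrm x.
Proof.
move=> x_neq0; apply/not_existsP => no_closer.
have x_far c : nrm x <= nrm (x - comb c) by rewrite leNgt; apply/negP/no_closer.
have [i x_ai] : exists i, x = a i.
  case: a_maxorth => _ /(_ _ (orthogonal_adjoin x_far x_neq0)); apply.
    by move=> _ [i ->]; exists (Some i).
  by exists None.
have := x_far (fun j => if i == j then 1 else 0).
by rewrite comb_delta -x_ai subrr (nrm0 hE) leNgt (nrm_gt0 hE).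
Qed.

Definition nrmT (v : 'I_m -> Kv) : R := \big[Num.max/0]_i (t i * absv (v i)).

Lemma nrmT_coord v i : t i * absv (v i) <= nrmT v.
Proof. exact: (le_bigmax _ (fun i => t i * absv (v i)) i). Qed.

Lemma nrmT_le v r : 0 <= r -> (forall i, t i * absv (v i) <= r) -> nrmT v <= r.
Proof. by move=> r_ge0 le_r; apply/bigmax_leP; split. Qed.

Lemma nrmTU v w : nrmT (v + w) <= Num.max (nrmT v) (nrmT w).
Proof.
apply: nrmT_le => [|i]; first by rewrite le_max bigmax_ge_id.
apply: le_trans (_ : t i * Num.max (absv (v i)) (absv (w i)) <= _).
  by rewrite ler_wpM2l ?(ltW (t_gt0 i)) // (absU hKv).
by rewrite maxr_pMr ?(ltW (t_gt0 i)) // ge_max !le_max !nrmT_coord ?orbT.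
Qed.

Lemma nrmTN v : nrmT (- v) = nrmT v.
Proof. by apply: eq_bigr => i _; rewrite /= (absN hKv). Qed.

Lemma nrmTZ l v : nrmT (iota l \*o v) = absK l * nrmT v.
Proof.
rewrite /nrmT bigmax_pMr ?(abs_ge0 hK) //; apply: eq_bigr => i _.
by rewrite (absM hKv) hiota mulrCA.
Qed.

Lemma nrmT_iota c : nrmT (iota \o c) = nrm (comb c).
Proof. by rewrite nrm_comb; apply: eq_bigr => i _; rewrite /= hiota mulrC. Qed.

(* Partial maps [E -> (K^vee)^m] are option-valued; [pliso S] says that the
   domain of [S] is a subspace on which [S] is a [K]-linear isometry extending
   the coordinate map of the span of [a]. *)
Definition pfun := E -> option ('I_m -> Kv).

Definition sub_pfun (S1 S2 : pfun) := forall x v, S1 x = Some v -> S2 x = Some v.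

Record pliso (S : pfun) : Prop := PLIso {
  pliso_comb : forall c, S (comb c) = Some (iota \o c);
  pliso_add : forall x y v w, S x = Some v -> S y = Some w -> S (x + y) = Some (v + w);
  pliso_scale : forall l x v, S x = Some v -> S (l *: x) = Some (iota l \*o v);
  pliso_norm : forall x v, S x = Some v -> nrmT v = nrm x }.

Lemma pliso0 S : pliso S -> S 0 = Some 0.
Proof.
move=> hS; have := pliso_comb hS (fun _ => 0).
rewrite /comb big1 => [->|i _]; last by rewrite scale0r.
by congr Some; apply: funext => i; rewrite /= rmorph0.
Qed.

Lemma plisoB S x y v w : pliso S -> S x = Some v -> S y = Some w ->
  S (x - y) = Some (v - w).
Proof.
move=> hS Sx Sy; apply: (pliso_add hS Sx).
have := pliso_scale hS (-1) Sy; rewrite scaleN1r => ->; congr Some.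
by apply: funext => i; rewrite /= rmorphN1 mulN1r.
Qed.

Definition coord_graph z u := exists c, z = comb c /\ u = iota \o c.

Lemma coord_graph_functional z u1 u2 : coord_graph z u1 -> coord_graph z u2 -> u1 = u2.
Proof. by move=> [c1 [-> ->]] [c2 [/comb_inj -> ->]]. Qed.

Lemma pliso_coord : pliso (pfun_of coord_graph).
Proof.
have coordE c : pfun_of coord_graph (comb c) = Some (iota \o c).
  by apply: (pfun_of_graph coord_graph_functional); exists c.
split=> [//|z1 z2 u1 u2 /(pfun_ofP coord_graph)[c1 [-> ->]]|
         l z u /(pfun_ofP coord_graph)[c [-> ->]]|z u /(pfun_ofP coord_graph)[c [-> ->]]].
- move=> /(pfun_ofP coord_graph)[c2 [-> ->]].
  rewrite -combD coordE; congr Some.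
  by apply: funext => i; rewrite /= rmorphD.
- by rewrite -combZ coordE; congr Some; apply: funext => i; rewrite /= rmorphM.
- exact: nrmT_iota.
Qed.

Section AdjoinOneVector.
Variables (S : pfun) (x : E).
Hypotheses (hS : pliso S) (Sx : S x = None).

Lemma exists_center_coord i : exists yi : Kv,
  forall z v, S z = Some v -> t i * absv (yi - v i) <= nrm (x - z).
Proof.
pose I := {p : E * ('I_m -> Kv) | S p.1 = Some p.2}.
case: (@hKvsc I (fun p => (sval p).2 i) (fun p => nrm (x - (sval p).1) / t i)).
- by constructor; exists (0, 0); exact: pliso0.
- by move=> p; rewrite divr_ge0 ?(nrm_ge0 hE) // ltW ?t_gt0.
- move=> [[z1 v1] /= S1] [[z2 v2] /= S2] /=; apply: (cball_nested hKv).
  rewrite -maxr_pMl ?invr_ge0 ?(ltW (t_gt0 i)) // ler_pdivlMr ?t_gt0 // mulrC.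
  apply: le_trans (nrmT_coord (v1 - v2) i) _.
  rewrite (pliso_norm hS (plisoB hS S1 S2)) -(subrKA x).
  apply: le_trans (nrmU hE _ _) _.
  by rewrite -(nrmN hK hE (z1 - x)) opprB maxC.
- move=> yi yi_center; exists yi => z v Szv.
  have := yi_center (exist _ (z, v) Szv).
  by rewrite /cball /= ler_pdivlMr ?t_gt0 // mulrC.
Qed.

Lemma exists_center : exists y : 'I_m -> Kv,
  forall z v, S z = Some v -> nrmT (y - v) <= nrm (x - z).
Proof.
have /fin_all_exists [y y_center] := exists_center_coord.
exists y => z v Szv; apply: nrmT_le => [|i]; first exact: (nrm_ge0 hE).
exact: y_center.
Qed.

Lemma center_dist y : (forall z v, S z = Some v -> nrmT (y - v) <= nrm (x - z)) ->
  forall z v, S z = Some v -> nrmT (y - v) = nrm (x - z).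
Proof.
move=> y_center z v Szv.
have xz_neq0 : x - z <> 0 by move/subr0_eq => xz; move: Sx; rewrite xz Szv.
have [c close] := exists_closer_comb xz_neq0.
have far : nrmT (y - (v + (iota \o c))) < nrm (x - z).
  apply: le_lt_trans (y_center _ _ (pliso_add hS Szv (pliso_comb hS c))) _.
  by rewrite opprD addrA.
have nrmT_c : nrmT (iota \o c) = nrm (x - z).
  by rewrite nrmT_iota; apply: (ultra_subr_eq (nrmN hK hE) (nrmU hE)).
have -> : y - v = (iota \o c) + (y - (v + (iota \o c))).
  by rewrite [RHS]addrC opprD addrA subrK.
by rewrite (ultra_addr_eq nrmTN nrmTU) nrmT_c.
Qed.

Variable y : 'I_m -> Kv.
Hypothesis y_center : forall z v, S z = Some v -> nrmT (y - v) = nrm (x - z).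

Definition adjoin_graph z u := exists f v (lam : K),
  [/\ S f = Some v, z = f + lam *: x & u = v + (iota lam \*o y)].

Lemma adjoin_graph_functional z u1 u2 :
  adjoin_graph z u1 -> adjoin_graph z u2 -> u1 = u2.
Proof.
move=> [f1 [v1 [l1 [S1 -> ->]]]] [f2 [v2 [l2 [S2 e ->]]]].
have [l12|l12] := eqVneq l1 l2.
  by move: e S1; rewrite l12 => /addIr ->; rewrite S2 => -[->].
have lx : (l1 - l2) *: x = f2 - f1.
  by rewrite scalerBl -[l1 *: x](addKr f1) e addrA addrK addrC.
have := pliso_scale hS (l1 - l2)^-1 (plisoB hS S2 S1).
by rewrite -lx scalerA mulVf ?scale1r ?subr_eq0 // Sx.
Qed.

Definition adjoined : pfun := pfun_of adjoin_graph.

Lemma adjoinedE z u : adjoin_graph z u -> adjoined z = Some u.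
Proof. exact: (pfun_of_graph adjoin_graph_functional). Qed.

Lemma adjoin_graph_of z v : S z = Some v -> adjoin_graph z v.
Proof.
move=> Szv; exists z, v, 0; split; rewrite ?scale0r ?addr0 //.
by rewrite rmorph0 mull0_fun addr0.
Qed.

Lemma adjoin_graph_norm z u : adjoin_graph z u -> nrmT u = nrm z.
Proof.
move=> [f [v [lam [Sf -> ->]]]].
have [->|lam_neq0] := eqVneq lam 0.
  by rewrite rmorph0 mull0_fun scale0r !addr0 (pliso_norm hS Sf).
have -> : v + iota lam \*o y = iota lam \*o (y - iota (- lam^-1) \*o v).
  apply: funext => i; rewrite /= !fctE /= mulrBr mulrA -rmorphM mulrN mulfV //.
  by rewrite rmorphN1 mulN1r opprK addrC.
rewrite nrmTZ (y_center (pliso_scale hS _ Sf)) -(nrmZ hE) scalerBr scalerA.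
by rewrite mulrN mulfV // scaleN1r opprK addrC.
Qed.

Lemma pliso_adjoined : pliso adjoined.
Proof.
split.
- by move=> c; apply/adjoinedE/adjoin_graph_of/(pliso_comb hS).
- move=> z1 z2 u1 u2 /(pfun_ofP adjoin_graph)[f1 [v1 [l1 [S1 -> ->]]]].
  move=> /(pfun_ofP adjoin_graph)[f2 [v2 [l2 [S2 -> ->]]]].
  apply: adjoinedE; exists (f1 + f2), (v1 + v2), (l1 + l2); split.
  + exact: (pliso_add hS S1 S2).
  + by rewrite scalerDl addrACA.
  + by apply: funext => i; rewrite /= !fctE /= rmorphD mulrDl addrACA.
- move=> l z u /(pfun_ofP adjoin_graph)[f [v [lam [Sf -> ->]]]].
  apply: adjoinedE; exists (l *: f), (iota l \*o v), (l * lam); split.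
  + exact: (pliso_scale hS _ Sf).
  + by rewrite scalerDr scalerA.
  + by apply: funext => i; rewrite /= !fctE /= rmorphM mulrDr mulrA.
- by move=> z u /(pfun_ofP adjoin_graph); exact: adjoin_graph_norm.
Qed.

Lemma sub_adjoined : sub_pfun S adjoined.
Proof. by move=> z v /adjoin_graph_of/adjoinedE. Qed.

Lemma adjoined_x : adjoined x <> None.
Proof.
rewrite (@adjoinedE x (0 + iota 1 \*o y)) //.
by exists 0, 0, 1; rewrite (pliso0 hS) add0r scale1r.
Qed.

End AdjoinOneVector.

Lemma pliso_extend S x : pliso S -> S x = None ->
  exists S', [/\ pliso S', sub_pfun S S' & S' x <> None].
Proof.
move=> hS Sx; have [y /(center_dist hS Sx) y_center] := exists_center x hS.
by exists (adjoined S x y); split;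
  [exact: pliso_adjoined | exact: sub_adjoined | exact: adjoined_x].
Qed.

Lemma pliso_chain_ub (A : set pfun) : (exists S, A S) ->
    (forall S, A S -> pliso S) -> total_on A sub_pfun ->
  exists U, pliso U /\ forall S, A S -> sub_pfun S U.
Proof.
move=> [S0 AS0] A_pliso A_total.
pose G z u := exists2 S, A S & S z = Some u.
have G_functional z u1 u2 : G z u1 -> G z u2 -> u1 = u2.
  move=> [S1 A1 e1] [S2 A2 e2]; have [sub|sub] := A_total _ _ A1 A2.
  - by move: (sub _ _ e1); rewrite e2 => -[].
  - by move: (sub _ _ e2); rewrite e1 => -[].
have UE S z u : A S -> S z = Some u -> pfun_of G z = Some u.
  by move=> AS Szu; apply: (pfun_of_graph G_functional); exists S.
exists (pfun_of G); split; last by move=> S AS z u; exact: UE.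
split.
- by move=> c; apply: (UE S0) => //; exact: (pliso_comb (A_pliso _ AS0) c).
- move=> z1 z2 u1 u2 /(pfun_ofP G)[S1 A1 e1] /(pfun_ofP G)[S2 A2 e2].
  have [sub|sub] := A_total _ _ A1 A2.
  + by apply: (UE S2) => //; exact: (pliso_add (A_pliso _ A2) (sub _ _ e1) e2).
  + by apply: (UE S1) => //; exact: (pliso_add (A_pliso _ A1) e1 (sub _ _ e2)).
- move=> l z u /(pfun_ofP G)[S1 A1 e1]; apply: (UE S1) => //.
  exact: (pliso_scale (A_pliso _ A1) _ e1).
- by move=> z u /(pfun_ofP G)[S1 A1 e1]; exact: (pliso_norm (A_pliso _ A1) e1).
Qed.

Lemma exists_total_pliso : exists S, pliso S /\ forall x, S x <> None.
Proof.
pose le_pliso (s1 s2 : {S | pliso S}) := `[< sub_pfun (sval s1) (sval s2) >].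
have [s s_max] : exists s, premaximal le_pliso s.
  apply: (ZL_preorder (exist _ _ pliso_coord)).
  - by move=> s; apply/asboolP.
  - by move=> s1 s2 s3 /asboolP sub12 /asboolP sub23; apply/asboolP => z v /sub12/sub23.
  move=> A A_total; have [[s0 As0]|A0] := pselect (exists s, A s); last first.
    by exists (exist _ _ pliso_coord) => s As; case: A0; exists s.
  case: (@pliso_chain_ub (sval @` A)).
  - by exists (sval s0), s0.
  - by move=> _ [s _ <-]; exact: svalP.
  - move=> _ _ [s1 A1 <-] [s2 A2 <-].
    by have [/asboolP|/asboolP] := A_total _ _ A1 A2; [left|right].
  - by move=> U [hU U_ub]; exists (exist _ U hU) => s As; apply/asboolP/U_ub; exists s.
exists (sval s); split => [|x Sx]; first exact: svalP.
have [S' [hS' sub_S' S'x]] := pliso_extend (svalP s) Sx.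
have /asboolP sub_S'_s := s_max (exist _ S' hS') (asboolT sub_S').
by case e: (S' x) S'x => [v|//] _; move: (sub_S'_s _ _ e); rewrite Sx.
Qed.

End IsometryExtension.

Theorem mainTheorem1
  (R : realType)
  (* the base field K: complete, non-trivially valued, non-archimedean, not spherically complete *)
  (K : fieldType) (absK : K -> R)
  (hK : nonarch_abs absK) (hKnt : nontrivial_abs absK) (hKc : complete_wrt absK)
  (hKnsc : ~ spherically_complete absK)
  (* K^vee: a spherically complete valued field, immediate extension of K *)
  (Kv : fieldType) (absv : Kv -> R) (iota : {rmorphism K -> Kv})
  (hKv : nonarch_abs absv) (hKvsc : spherically_complete absv)
  (hiota : forall d : K, absv (iota d) = absK d)
  (himm : forall x : Kv, x <> 0 -> exists d : K, absv (x - iota d) < absv x)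
  (* the non-archimedean Banach space E *)
  (E : lmodType K) (nrm : E -> R)
  (hE : nonarch_norm absK nrm) (hEc : complete_wrt nrm)
  (* X = {a_1, ..., a_m} a (finite) maximal orthogonal subset *)
  (m : nat) (a : 'I_m -> E) (ha_inj : injective a)
  (hX : maximal_orthogonal nrm (fun x => exists i, x = a i)) :
  exists T : E -> 'I_m -> Kv,
    [/\ (forall x y i, T (x + y) i = T x i + T y i),
        (forall (l : K) x i, T (l *: x) i = iota l * T x i),
        (forall x, \big[Num.max/0]_(i < m) (nrm (a i) * absv (T x i)) = nrm x) &
        (forall i j, T (a i) j = if i == j then 1 else 0)].
Proof.
have [S [hS S_total]] := exists_total_pliso hK hKv hKvsc hiota hE ha_inj hX.
pose T z := odflt 0 (S z).
have ST z : S z = Some (T z) by rewrite /T; case: (S z) (S_total z) => // /(_ erefl).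
exists T; split=> [x y i|l x i|x|i j].
- by have := pliso_add hS (ST x) (ST y); rewrite ST => -[->].
- by have := pliso_scale hS l (ST x); rewrite ST => -[->].
- exact: (pliso_norm hS (ST x)).
- have := pliso_comb hS (fun j => if i == j then 1 else 0).
  rewrite comb_delta ST => -[->] /=.
  by case: (i == j); rewrite ?rmorph1 ?rmorph0.
Qed.
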